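(* Let $(\mathcal{X},\rho)$ be a totally bounded metric space, let $c:\mathcal{X}\to\mathcal{Y}$ be a concept, and let $\ell$ be the zero-one loss $\ell(x,y,\hat y)=\mathbb{1}\{y\neq\hat y\}$. Then there exists a sequence of instances $(x_t)_{t\ge1}$ in $\mathcal{X}$ on which the 1-nearest neighbor rule fails to achieve sublinear regret on $c$, i.e. such that $$\frac1T\sum_{t=1}^T \mathbb{1}\{c(x_t)\neq \hat y_t\}\not\to 0 \quad (T\to\infty),$$ if and only if there is no positive separation between classes: $$\inf_{x,x'\in\mathcal{X}:\,c(x)\neq c(x')}\rho(x,x')=0.$$
   Context: Online classification: at each time $t=1,2,\dots$ the learner receives $x_t\in\mathcal{X}$, predicts $\hat y_t\in\mathcal{Y}$, then sees the label $y_t=c(x_t)$ (realizable setting with fixed concept $c$). The 1-nearest neighbor rule predicts $\hat y_t=y_{\mathrm{NN}_t}$ where $\mathrm{NN}_t\in\arg\min_{\tau=1,\dots,t-1}\rho(x_t,x_\tau)$, with ties broken arbitrarily (the prediction at $t=1$ is arbitrary). Sublinear regret here means the average loss $\frac1T\sum_{t\le T}\ell(x_t,y_t,\hat y_t)$ converges to $0$. The infimum over an empty set is $+\infty$. *)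

From HB Require Import structures.
From mathcomp Require Import all_boot all_order all_algebra.
From mathcomp Require Import all_classical all_reals all_analysis.
Set Implicit Arguments. Unset Strict Implicit. Unset Printing Implicit Defensive.
Import Order.TTheory GRing.Theory Num.Theory.
Local Open Scope classical_set_scope.
Local Open Scope ring_scope.

Definition is_metric (R : realType) (X : Type) (rho : X -> X -> R) : Prop :=
  [/\ forall x y, 0 <= rho x y,
      forall x y, rho x y = 0 <-> x = y,
      forall x y, rho x y = rho y x
    & forall x y z, rho x z <= rho x y + rho y z].

Definition totally_bounded (R : realType) (X : Type) (rho : X -> X -> R) : Prop :=
  forall eps : R, 0 < eps ->
    exists (n : nat) (f : 'I_n -> X), forall x, exists i : 'I_n, rho x (f i) < eps.

Definition valid_tiebreak (R : realType) (X : Type) (rho : X -> X -> R)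
    (tb : seq X -> X -> nat) : Prop :=
  forall (s : seq X) (x : X), s <> [::] ->
    (tb s x < size s)%N /\
    forall j, (j < size s)%N -> rho x (nth x s (tb s x)) <= rho x (nth x s j).

(* Prediction of the 1-NN rule at (0-based) time t on the sequence xs:
   the first prediction is given by the arbitrary function [first]. *)
Definition nn_pred (X Y : Type) (c : X -> Y) (tb : seq X -> X -> nat)
    (first : X -> Y) (xs : nat -> X) (t : nat) : Y :=
  if t is t'.+1 then c (xs (tb [seq xs i | i <- iota 0 t] (xs t)))
  else first (xs 0%N).

Definition nn_mistake (X Y : Type) (c : X -> Y) (tb : seq X -> X -> nat)
    (first : X -> Y) (xs : nat -> X) (t : nat) : nat :=
  asbool (c (xs t) <> nn_pred c tb first xs t).

(* average loss over the first T = n.+1 rounds *)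
Definition nn_avg_loss (R : realType) (X Y : Type) (c : X -> Y)
    (tb : seq X -> X -> nat) (first : X -> Y) (xs : nat -> X) (n : nat) : R :=
  (\sum_(t < n.+1) nn_mistake c tb first xs t)%:R / n.+1%:R.

(* infimum of distances between points with different labels (+oo if empty) *)
Definition class_sep (R : realType) (X Y : Type) (rho : X -> X -> R) (c : X -> Y)
  : \bar R :=
  ereal_inf [set (rho p.1 p.2)%:E | p in [set p : X * X | c p.1 <> c p.2]].

From HB Require Import structures.
From mathcomp Require Import all_boot all_order all_algebra.
From mathcomp Require Import all_classical all_reals all_analysis.
From mathcomp Require Import lra.

Set Implicit Arguments.
Unset Strict Implicit.
Unset Printing Implicit Defensive.

Import Order.TTheory GRing.Theory Num.Theory.
Import numFieldNormedType.Exports.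
Local Open Scope classical_set_scope.
Local Open Scope ring_scope.

(* If the classes are d-separated, every mistake after the first is made at a
   point at distance at least d from all earlier points (its nearest neighbour
   carries the other label).  The mistake points are thus d-separated, so they
   fall into distinct cells of a finite (d/2)-net and the number of mistakes is
   bounded.  If the separation is 0, present pairs (a, b) of differently
   labelled points closer than a quarter of every positive gap in the history.
   If b is predicted correctly, its nearest neighbour lies in the history and
   is within 4 rho(a, b) of the nearest neighbour of a, hence equal to it, so a
   receives the label of b: every pair costs a mistake and the average loss
   stays above 1/2. *)

Lemma finite_pos_lower_bound (R : realDomainType) (T : finType) (g : T -> R) :
  exists2 r, 0 < r & forall t, 0 < g t -> r <= g t.
Proof.
exists (\big[Num.min/1]_(t | 0 < g t) g t).
  by elim/big_ind: _ => // x y x0 y0; rewrite lt_min x0.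
by move=> t gt0; rewrite (bigD1 t) //= ge_min lexx.
Qed.

Section NearestNeighbor.

Variables (R : realType) (X Y : Type) (rho : X -> X -> R) (c : X -> Y).
Variables (tb : seq X -> X -> nat) (first : X -> Y).
Hypothesis rho_metric : is_metric rho.
Hypothesis tb_valid : valid_tiebreak rho tb.

Definition nn_label (s : seq X) (x : X) : Y := c (nth x s (tb s x)).

Lemma nn_mistakeS (xs : nat -> X) t :
  nn_mistake c tb first xs t.+1 =
  asbool (c (xs t.+1) <> nn_label (mkseq xs t.+1) (xs t.+1)) :> nat.
Proof.
have [+ _] := @tb_valid (mkseq xs t.+1) (xs t.+1) ltac:(by []).
by rewrite size_mkseq /nn_mistake /nn_label => /(nth_mkseq (xs t.+1)) ->.
Qed.

Lemma class_sep_ge0 : (0 <= class_sep rho c)%E.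
Proof.
case: rho_metric => rho_ge0 _ _ _.
by apply: le_ereal_inf_tmp => _ [p _ <-]; rewrite lee_fin.
Qed.

Lemma class_sep_neq0_gap : class_sep rho c <> 0%E ->
  exists2 d, 0 < d & forall x y, c x <> c y -> d <= rho x y.
Proof.
have sep_le x y : c x <> c y -> (class_sep rho c <= (rho x y)%:E)%E.
  by move=> cxy; apply: ereal_inf_lbound; exists (x, y).
have := class_sep_ge0; case E: class_sep => [r| |] // r_ge0 r_neq0.
- exists r => [|x y /sep_le]; last by rewrite E lee_fin.
  by rewrite lt_def -lee_fin r_ge0 andbT; apply/eqP => r0; rewrite r0 in r_neq0.
- by exists 1 => // x y /sep_le; rewrite E.
Qed.

Lemma mistake_far_from_past (d : R) (xs : nat -> X) t s :
  (forall x y, c x <> c y -> d <= rho x y) -> (s <= t)%N ->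
  nn_mistake c tb first xs t.+1 = 1%N -> d <= rho (xs t.+1) (xs s).
Proof.
move=> gap st; rewrite nn_mistakeS; case: asboolP => // /gap d_le _.
have [_ /(_ s)] := @tb_valid (mkseq xs t.+1) (xs t.+1) ltac:(by []).
rewrite size_mkseq ltnS => /(_ st); rewrite [nth _ _ s]nth_mkseq ?ltnS //.
exact: le_trans.
Qed.

Lemma card_separated_le_net (d : R) (n N : nat) (f : 'I_n -> X) (g : X -> 'I_n)
    (p : 'I_N -> X) (A : {pred 'I_N}) :
  (forall x, rho x (f (g x)) < d / 2) ->
  {in A &, forall i j, i != j -> d <= rho (p i) (p j)} -> (#|A| <= n)%N.
Proof.
case: rho_metric => _ _ rho_sym rho_tri net sep.
rewrite -[n]card_ord; apply: (leq_card_in (g \o p)) => i j Ai Aj /= gij.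
apply/eqP; apply: contraT => /(sep _ _ Ai Aj); apply: contraLR => _; rewrite -ltNge.
apply: (le_lt_trans (rho_tri _ (f (g (p i))) _)).
by rewrite [d]splitr ltrD // rho_sym gij.
Qed.

Lemma nn_mistakes_le_net (d : R) (n : nat) (f : 'I_n -> X) (g : X -> 'I_n)
    (xs : nat -> X) N :
  (forall x y, c x <> c y -> d <= rho x y) ->
  (forall x, rho x (f (g x)) < d / 2) ->
  (\sum_(t < N.+1) nn_mistake c tb first xs t <= n.+1)%N.
Proof.
move=> gap net; rewrite big_ord_recl -[n.+1]add1n leq_add ?leq_b1 //.
have -> : (\sum_(i < N) nn_mistake c tb first xs (lift ord0 i) =
           #|[pred i : 'I_N | nn_mistake c tb first xs i.+1 == 1%N]|)%N.
  rewrite -sum1_card [RHS]big_mkcond; apply: eq_bigr => i _.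
  by rewrite lift0 inE /nn_mistake; case: asboolP.
apply: (card_separated_le_net (p := fun i => xs i.+1) net).
case: rho_metric => _ _ rho_sym _.
move=> i j; rewrite !inE => /eqP mi /eqP mj nij.
case: (ltngtP i j) => [ij | ji | /val_inj ij]; last by rewrite ij eqxx in nij.
- by rewrite rho_sym; apply: (mistake_far_from_past gap ij mj).
- exact: (mistake_far_from_past gap ji mi).
Qed.

Lemma nn_avg_loss_cvg0 (xs : nat -> X) :
  totally_bounded rho -> class_sep rho c <> 0%E ->
  nn_avg_loss R c tb first xs @ \oo --> 0.
Proof.
move=> tbounded /class_sep_neq0_gap [d d_gt0 gap].
have [n [f /choice [g net]]] := tbounded (d / 2) (divr_gt0 d_gt0 (ltr0Sn _ 1)).
apply: (@squeeze_cvgr _ _ _ _ (fun=> 0) (fun N => n.+1%:R * harmonic N)).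
- apply: nearW => N; rewrite /nn_avg_loss divr_ge0 //=.
  rewrite /harmonic ler_pM2r ?invr_gt0 ?ltr0Sn // ler_nat.
  exact: nn_mistakes_le_net gap net.
- exact: cvg_cst.
- by rewrite -(mulr0 n.+1%:R); apply: cvgM; [apply: cvg_cst | apply: cvg_harmonic].
Qed.

Definition gaps_exceed (r : R) (s : seq X) : Prop :=
  forall i j : 'I_(size s),
  0 < rho (tnth (in_tuple s) i) (tnth (in_tuple s) j) ->
  r < rho (tnth (in_tuple s) i) (tnth (in_tuple s) j).

Lemma class_sep0_pair (s : seq X) : class_sep rho c = 0%E ->
  exists p : X * X, c p.1 <> c p.2 /\ gaps_exceed (4 * rho p.1 p.2) s.
Proof.
move=> sep0.
have [r r_gt0 r_le] := finite_pos_lower_bound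
  (fun ij : 'I_(size s) * 'I_(size s) =>
     rho (tnth (in_tuple s) ij.1) (tnth (in_tuple s) ij.2)).
have : (class_sep rho c < (r / 4)%:E)%E by rewrite sep0 lte_fin divr_gt0.
case/ereal_inf_lt => _ [p cp <-]; rewrite lte_fin => close.
exists p; split => // i j /(r_le (i, j)); apply: lt_le_trans.
by rewrite mulrC -ltr_pdivlMr.
Qed.

Lemma nn_pair_dist_le (a b q q' : X) :
  rho b q' <= rho b a -> rho a q <= rho a q' -> rho q' q <= 4 * rho a b.
Proof.
case: rho_metric => _ _ rho_sym rho_tri bq' aq.
have := rho_tri q' a q; have := rho_tri a b q'.
have := rho_sym q' a; have := rho_sym b a; lra.
Qed.

Lemma pair_round_mistake (P : seq X) (a b : X) :
  c a <> c b -> gaps_exceed (4 * rho a b) P ->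
  c b <> nn_label (rcons P a) b \/ (P <> [::] /\ c a <> nn_label P a).
Proof.
case: rho_metric => rho_ge0 rho0 _ _ cab gaps.
case: (pselect (c b = nn_label (rcons P a) b)) => [cb | ]; last by left.
right; rewrite /nn_label in cb *.
have [] := @tb_valid (rcons P a) b ltac:(by case: (P)).
set j := tb (rcons P a) b in cb *.
rewrite size_rcons ltnS leq_eqVlt => /orP[/eqP j_last | jP].
  by rewrite j_last nth_rcons ltnn eqxx in cb; case: cab.
move=> /(_ (size P)); rewrite ltnSn !nth_rcons ltnn eqxx jP => /(_ isT) bq'.
have P0 : P <> [::] by move=> P0; rewrite P0 in jP.
split=> //.
have [iP /(_ j jP)] := tb_valid a P0; set i := tb P a in iP * => aq.
rewrite nth_rcons jP (set_nth_default a) // in cb bq'.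
suff -> : nth a P i = nth a P j by rewrite -cb.
apply/esym/rho0/eqP; rewrite eq_le rho_ge0 andbT leNgt; apply/negP => pos.
have := gaps (Ordinal jP) (Ordinal iP); rewrite !(tnth_nth a) /= => /(_ pos).
by rewrite ltNge nn_pair_dist_le.
Qed.

(* Time steps 2k and 2k+1 present the k-th pair chosen by [pr] from the
   history of the first k pairs. *)
Fixpoint pair_history (pr : seq X -> X * X) (k : nat) : seq X :=
  if k is k'.+1 then
    let P := pair_history pr k' in rcons (rcons P (pr P).1) (pr P).2
  else [::].

Definition pair_stream (pr : seq X -> X * X) (t : nat) : X :=
  let p := pr (pair_history pr t./2) in if odd t then p.2 else p.1.

Lemma pair_stream_double pr k : pair_stream pr k.*2 = (pr (pair_history pr k)).1.
Proof. by rewrite /pair_stream odd_double doubleK. Qed.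

Lemma pair_stream_doubleS pr k : pair_stream pr k.*2.+1 = (pr (pair_history pr k)).2.
Proof. by rewrite /pair_stream /= odd_double uphalf_double. Qed.

Lemma mkseq_pair_stream pr k : mkseq (pair_stream pr) k.*2 = pair_history pr k.
Proof.
elim: k => //= k IH.
by rewrite doubleS !mkseqS IH pair_stream_double pair_stream_doubleS.
Qed.

Section PairStream.

Variable pr : seq X -> X * X.
Hypothesis pr_spec : forall s : seq X,
  c (pr s).1 <> c (pr s).2 /\ gaps_exceed (4 * rho (pr s).1 (pr s).2) s.

Let mistake := nn_mistake c tb first (pair_stream pr).

Lemma pair_stream_mistake k : (1 <= mistake k.*2 + mistake k.*2.+1)%N.
Proof.
set P := pair_history pr k; have [cab gaps] := pr_spec P.
have past_b : mkseq (pair_stream pr) k.*2.+1 = rcons P (pr P).1.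
  by rewrite mkseqS mkseq_pair_stream pair_stream_double.
case: (pair_round_mistake cab gaps) => [bad_b | [P0 bad_a]].
  rewrite /mistake nn_mistakeS past_b pair_stream_doubleS.
  by case: asboolP => // _; rewrite addn1.
have k_pos : (0 < k.*2)%N.
  rewrite -(size_mkseq (pair_stream pr) k.*2) mkseq_pair_stream -/P lt0n.
  by apply/eqP => /size0nil.
rewrite /mistake -(prednK k_pos) nn_mistakeS prednK // mkseq_pair_stream.
by rewrite pair_stream_double; case: asboolP.
Qed.

Lemma pair_stream_mistakes_ge k : (k <= \sum_(t < k.*2) mistake t)%N.
Proof.
elim: k => // k IH.
by rewrite doubleS !big_ord_recr /= -addnA -addn1 leq_add ?pair_stream_mistake.
Qed.

Lemma pair_stream_avg_loss_ge k :
  1 / 2 <= nn_avg_loss R c tb first (pair_stream pr) k.*2.+1.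
Proof.
rewrite /nn_avg_loss -doubleS -/mistake.
have := pair_stream_mistakes_ge k.+1; rewrite -(ler_nat R).
rewrite -mul2n natrM ler_pdivlMr ?mulr_gt0 ?ltr0Sn //; lra.
Qed.

End PairStream.

Lemma nn_avg_loss_not_cvg0 : class_sep rho c = 0%E ->
  exists xs : nat -> X, ~ (nn_avg_loss R c tb first xs @ \oo --> 0).
Proof.
move=> sep0; have [pr pr_spec] := choice (fun s => class_sep0_pair s sep0).
exists (pair_stream pr) => /cvgrPdist_lt /(_ (1 / 2) ltac:(lra)) [N _ small].
have /small : (N <= N.*2.+1)%N by apply: leqW; rewrite -addnn leq_addr.
rewrite /= sub0r normrN ger0_norm ?divr_ge0 // ltNge.
by rewrite (pair_stream_avg_loss_ge pr_spec).
Qed.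

End NearestNeighbor.

Theorem proposition1 (R : realType) (X Y : Type) (rho : X -> X -> R) (c : X -> Y)
    (tb : seq X -> X -> nat) (first : X -> Y) :
  is_metric rho -> totally_bounded rho -> valid_tiebreak rho tb ->
  (exists xs : nat -> X, ~ (nn_avg_loss R c tb first xs @ \oo --> 0%R))
  <-> class_sep rho c = 0%E.
Proof.
move=> rho_metric tbounded tb_valid; split.
- move=> [xs not_cvg]; apply: contrapT => sep_neq0; apply: not_cvg.
  exact: (nn_avg_loss_cvg0 first rho_metric tb_valid xs tbounded sep_neq0).
- exact: (nn_avg_loss_not_cvg0 first rho_metric tb_valid).
Qed.
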